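(* Let $q$ be a prime power and $n \ge 2$ an integer. For any $\epsilon_1, \epsilon_2 > 0$ there is a constant $C = C(\epsilon_1,\epsilon_2,n,q)$ such that, if an $n$-tuple $(T_1,\ldots,T_n)$ of positive integers satisfies $T_1\cdots T_n > C$, then choosing a periodic sequence $s:\mathbb{N}_0^n \to \mathbb{F}_q$ of period $(T_1,\ldots,T_n)$ with each such sequence having equal probability $1/q^{T_1\cdots T_n}$, we have $$\mathcal{P}\left( L(s) > \sqrt{(1-\epsilon_1) T_1\cdots T_n/(n-1)} \right) > 1 - \epsilon_2.$$
   Context: An $n$-dimensional sequence over $\mathbb{F}_q$ is a map $s:\mathbb{N}_0^n \to \mathbb{F}_q$. A polynomial $P(\mathbf{X}) = \sum_{\mathbf{j}} a_{\mathbf{j}} X_1^{j_1}\cdots X_n^{j_n} \in \mathbb{F}_q[X_1,\ldots,X_n]$ acts on $s$ by $(Ps)(\mathbf{m}) = \sum_{\mathbf{j}} a_{\mathbf{j}} s(\mathbf{m}+\mathbf{j})$. Let $I(s) = \{P : Ps = 0\}$, an ideal. The linear complexity $L(s)$ is the dimension of $\mathbb{F}_q[X_1,\ldots,X_n]/I(s)$ over $\mathbb{F}_q$. The sequence $s$ is periodic with period $(T_1,\ldots,T_n)$ if $X_i^{T_i}-1 \in I(s)$ for all $i$, i.e. $s(\mathbf{m}+T_i\mathbf{e}_i)=s(\mathbf{m})$ for all $\mathbf{m}$ and $i$; such a sequence is determined by its values on $\{(m_1,\ldots,m_n): 0 \le m_i \le T_i-1\}$, so there are $q^{T_1\cdots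 T_n}$ of them. *)

From Stdlib Require Import Reals ClassicalEpsilon.
From HB Require Import structures.
From mathcomp Require Import all_boot all_algebra all_field.
From mathcomp Require Import mpoly.

Set Implicit Arguments.
Unset Strict Implicit.
Unset Printing Implicit Defensive.

Import GRing.Theory.
Local Open Scope ring_scope.

(* An n-dimensional sequence over F: a map N_0^n -> F, with N_0^n = 'X_{1..n}
   (the monoid of multi-indices of multinomials). *)
Definition nseq_ (n : nat) (F : Type) := 'X_{1..n} -> F.

Definition act (n : nat) (F : nzRingType) (P : {mpoly F[n]}) (s : nseq_ n F)
  : nseq_ n F :=
  fun m => \sum_(mo <- msupp P) P@_mo * s (m + mo)%MM.

Definition in_I (n : nat) (F : nzRingType) (s : nseq_ n F) (P : {mpoly F[n]}) :=
  forall m, act P s m = 0.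

(* dim_F F[X]/I(s) >= k : there are k polynomials that are linearly
   independent modulo I(s). *)
Definition quot_dim_ge (n : nat) (F : fieldType) (s : nseq_ n F) (k : nat) :=
  exists P : 'I_k -> {mpoly F[n]},
    forall c : 'I_k -> F, in_I s (\sum_(i < k) c i *: P i) -> forall i, c i = 0.

(* L(s) > x  (L(s) = dim_F F[X]/I(s), possibly infinite). *)
Definition linear_complexity_gt (n : nat) (F : fieldType) (s : nseq_ n F)
  (x : R) : Prop :=
  exists k : nat, Rlt x (INR k) /\ quot_dim_ge s k.

Definition box (n : nat) (T : 'I_n -> nat) := {dffun forall i : 'I_n, 'I_(T i)}.

Definition periodic_ext (n : nat) (F : Type) (T : 'I_n -> nat)
  (hT : forall i, (0 < T i)%N) (p : {ffun box T -> F}) : nseq_ n F :=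
  fun m => p (@finfun 'I_n (fun i => 'I_(T i))
                (fun i => Ordinal (@ltn_pmod (m i) (T i) (hT i)))).

Definition pbool (P : Prop) : bool :=
  if excluded_middle_informative P then true else false.

Definition prob_lc_gt (n : nat) (F : finFieldType) (T : 'I_n -> nat)
  (hT : forall i, (0 < T i)%N) (x : R) : R :=
  Rdiv (INR #|[set p : {ffun box T -> F} |
            pbool (linear_complexity_gt (periodic_ext hT p) x)]|)
       (INR (#|F| ^ (\prod_(i < n) T i))%N).

From Stdlib Require Import Reals Lra ClassicalEpsilon.
From HB Require Import structures.
From mathcomp Require Import all_boot all_order all_algebra.
From mathcomp Require Import mpoly zify.

(* Let N = T_1...T_n.  Pick k just above sqrt((1-eps1) N/(n-1)) and a box A of
   at least k exponents inside the period box such that the set R of shifts r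
   with r + A inside the period box has at least k + K elements.  If the
   monomials X^a (a in A) are dependent modulo I(s), some nonzero c satisfies
   sum_a c_a s(r + a) = 0 for all r in R.  For fixed c these |R| linear
   equations are triangular for a monomial order (the term of largest
   exponent a with c_a <> 0 leads, at the distinct positions r + a), so at
   most q^(N-|R|) periods satisfy them.  Over the q^k choices of c, the
   exceptional periods have probability at most q^(k-|R|) <= q^-K < eps2, and
   every other s has L(s) >= k. *)

Set Implicit Arguments.
Unset Strict Implicit.
Unset Printing Implicit Defensive.

Import GRing.Theory Order.TTheory.

Lemma prodn_split_at (f : nat -> nat) j n : j < n ->
  \prod_(0 <= i < n) f i =
  \prod_(0 <= i < j) f i * f j * \prod_(j.+1 <= i < n) f i.
Proof.
move=> ltjn; rewrite (@big_cat_nat _ _ _ j) ?(ltnW ltjn) //=.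
by rewrite (big_ltn ltjn) mulnA.
Qed.

Lemma ceil_cut_bounds P t v Q k :
  0 < P <= k -> 0 < Q -> 0 < v <= t -> P * v.-1 < k ->
  P * t * Q < 2 * k * ((t - v).+1 * Q) /\
  (P = 1 \/ Q = 1 -> P * t * Q < k * ((t - v).+1 * Q + 1)).
Proof.
move=> /andP[P0 Pk] Q0 /andP[v0 vt] Pv.
have split_t : P * t * Q = P * ((t - v).+1 * Q) + P * v.-1 * Q by nia.
have QR : Q <= (t - v).+1 * Q by rewrite leq_pmull.
split; first by nia.
by case=> [P1|Q1]; rewrite split_t; [rewrite P1 in Pv *|rewrite Q1 in QR *]; nia.
Qed.

Definition prefix_cut (T : nat -> nat) j v i :=
  if i < j then T i else if i == j then v else 1.

Lemma prod_prefix_cut T j v n : j < n ->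
  \prod_(0 <= i < n) prefix_cut T j v i = \prod_(0 <= i < j) T i * v.
Proof.
move=> jn; rewrite (prodn_split_at _ jn) /prefix_cut ltnn eqxx.
rewrite (@eq_big_nat _ _ _ 0 j _ T) => [|i /andP[_ ->] //].
rewrite (@eq_big_nat _ _ _ j.+1 n _ (fun=> 1)) ?big1_eq ?muln1 // => i /andP[ji _].
by rewrite ltnNge ltnW //= gtn_eqF.
Qed.

Lemma prod_shift_prefix_cut T j v n : (forall i, 0 < T i) -> j < n ->
  \prod_(0 <= i < n) (T i - prefix_cut T j v i).+1 =
  (T j - v).+1 * \prod_(j.+1 <= i < n) T i.
Proof.
move=> T0 jn; rewrite (prodn_split_at _ jn) /prefix_cut ltnn eqxx.
rewrite (@eq_big_nat _ _ _ 0 j _ (fun=> 1)) => [|i /andP[_ ->]]; last by rewrite subnn.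
rewrite big1_eq mul1n; congr (_ * _); apply: eq_big_nat => i /andP[ji _].
by rewrite ltnNge ltnW //= gtn_eqF // subn1 prednK.
Qed.

(* The witness takes full sides before the first index j at which the prefix
   product P reaches k, the side ceil(k/P) at j, and sides 1 after j. *)
Lemma exists_subbox_nat n (T : nat -> nat) k :
  0 < n -> (forall i, 0 < T i) -> 0 < k -> k <= \prod_(0 <= i < n) T i ->
  exists u : nat -> nat, (forall i, 0 < u i <= T i) /\
    k <= \prod_(0 <= i < n) u i /\
    let N := \prod_(0 <= i < n) T i in let R := \prod_(0 <= i < n) (T i - u i).+1 in
    N < 2 * k * R /\ (n <= 2 -> N < k * (R + 1)).
Proof.
move=> n0 T0 k0 kN.
have exj : exists j, k <= \prod_(0 <= i < j.+1) T i by exists n.-1; rewrite prednK.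
case: (ex_minnP exj) => j kPj jmin.
have jn : j < n.
  by rewrite ltnNge; apply/negP => nj; have := jmin n.-1; rewrite prednK //; lia.
set P := \prod_(0 <= i < j) T i in kPj *.
rewrite big_nat_recr //= -/P in kPj.
have P0 : 0 < P by apply: prodn_gt0.
have Pk : P <= k.
  case: (posnP j) => [j0|j0]; first by rewrite /P j0 big_geq.
  by have := jmin j.-1; rewrite prednK // -/P; lia.
pose v := (k.-1 %/ P).+1.
have kPv : k <= P * v by rewrite /v mulnC; have := ltn_ceil k.-1 P0; lia.
have Pv : P * v.-1 < k by rewrite /= mulnC; have := leq_trunc_div k.-1 P; lia.
have vT : v <= T j by rewrite /v ltn_divLR //; lia.
exists (prefix_cut T j v); split.
  by move=> i; rewrite /prefix_cut; case: (ltngtP i j) => [_|_|->]; rewrite ?T0 ?leqnn.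
rewrite prod_prefix_cut // prod_shift_prefix_cut // (prodn_split_at _ jn) -/P.
set Q := \prod_(j.+1 <= i < n) T i; split=> //.
have Q0 : 0 < Q by apply: prodn_gt0.
have [lt2kR ltkR1] : _ /\ _ := ceil_cut_bounds (P := P) (t := T j) (v := v)
  (introT andP (conj P0 Pk)) Q0 (introT andP (conj isT vT)) Pv.
split=> // n2; apply: ltkR1; case: (posnP j) => [j0|j0].
  by left; rewrite /P j0 big_geq.
by right; rewrite /Q big_geq //; lia.
Qed.

Lemma exists_subbox n (T : 'I_n -> nat) k K :
  2 <= n -> (forall i, 0 < T i) -> 0 < k ->
  (n - 1) * k * (k + K + 1) <= \prod_(i < n) T i ->
  exists u : 'I_n -> nat, (forall i, 0 < u i <= T i) /\
    k <= \prod_(i < n) u i /\ k + K <= \prod_(i < n) (T i - u i).+1.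
Proof.
move=> n2 T0 k0 kKN.
pose Tn i := if insub i is Some i' then T i' else 1.
have TnE (i : 'I_n) : Tn i = T i by rewrite /Tn valK.
have Tn0 i : 0 < Tn i by rewrite /Tn; case: insub.
have prodTn : \prod_(0 <= i < n) Tn i = \prod_(i < n) T i.
  by rewrite big_mkord; apply: eq_bigr => i _; rewrite TnE.
have kN : k <= \prod_(0 <= i < n) Tn i by rewrite prodTn; nia.
have [u [u_bnd [ku [lt2kR ltkR1]]]] := exists_subbox_nat (ltnW n2) Tn0 k0 kN.
exists (fun i => u i); split; first by move=> i; rewrite -TnE.
split; first by move: ku; rewrite big_mkord.
move: lt2kR ltkR1; rewrite prodTn !big_mkord.
have -> : \prod_(i < n) (Tn i - u i).+1 = \prod_(i < n) (T i - u i).+1.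
  by apply: eq_bigr => i _; rewrite TnE.
set N := \prod_(i < n) T i; set R := \prod_(i < n) _ => lt2kR ltkR1.
case: (ltngtP n 2) => [|n3|n2']; first by lia.
- have : 2 * k * (k + K + 1) < 2 * k * R by apply: leq_ltn_trans lt2kR; nia.
  by rewrite ltn_pmul2l; lia.
- have : k * (k + K + 1) < k * (R + 1) by apply: leq_ltn_trans (ltkR1 _); rewrite ?n2'; nia.
  by rewrite ltn_pmul2l; lia.
Qed.

Lemma exists_near_sqrt M D K N :
  2 <= M -> 0 < D -> M * D * (2 * M + (M - 1) * (K + 1)) ^ 2 < N ->
  exists k, [/\ 0 < k, (M - 1) * N < M * D * k ^ 2 & D * k * (k + K + 1) <= N].
Proof.
move=> M2 D0; set K' := 2 * M + _ => K'N.
have ex_k : exists k, (M - 1) * N < M * D * k ^ 2.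
  exists N; have N0 : 0 < N by lia.
  have : N <= D * N ^ 2 by rewrite mulnC expnS expn1 -mulnA leq_pmulr ?muln_gt0 ?N0.
  nia.
case: (ex_minnP ex_k) => k k_sq k_min.
have k0 : 0 < k by case: k k_sq {k_min} => //; rewrite exp0n // muln0.
exists k; split=> //.
have k_pred : M * D * k.-1 ^ 2 <= (M - 1) * N.
  by rewrite leqNgt; apply/negP => /k_min; lia.
have K'k : K' < k.
  rewrite ltnNge; apply/negP => kK'.
  have : M * D * k ^ 2 <= M * D * K' ^ 2 by rewrite leq_mul2l leq_exp2r // kK' orbT.
  have : N <= (M - 1) * N by rewrite leq_pmull //; lia.
  lia.
(* This is where the constant 2 M + (M - 1) (K + 1) comes from. *)
have k_sq_bound : (M - 1) * (k * (k + K + 1)) <= M * k.-1 ^ 2.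
  move: K'k; rewrite /K'; case: k {k0 k_sq k_min k_pred} => // j.
  rewrite ltnS /= => jK; set m := M - 1.
  have -> : M = m.+1 by rewrite /m; lia.
  have : j * (m * K + 3 * m + 2) <= j * j by rewrite leq_mul2l; apply/orP; right; lia.
  nia.
have : (M - 1) * (D * k * (k + K + 1)) <= (M - 1) * N.
  apply: leq_trans k_pred; rewrite mulnCA -mulnA [M * _]mulnC -mulnA leq_mul2l.
  by rewrite mulnCA k_sq_bound orbT.
by rewrite leq_pmul2l //; lia.
Qed.

Lemma card_ffun_determined_off (B F : finType) (X : {set {ffun B -> F}}) (L : {set B}) :
  {in X &, forall p1 p2 : {ffun B -> F}, {in ~: L, p1 =1 p2} -> p1 = p2} ->
  #|X| <= #|F| ^ (#|B| - #|L|).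
Proof.
move=> detX; pose restr (p : {ffun B -> F}) := [ffun b : {b | b \in ~: L} => p (val b)].
have restr_inj : {in X &, injective restr}.
  move=> p1 p2 Xp1 Xp2 /ffunP eq12; apply: detX => // b bL.
  by have := eq12 (exist _ b bL); rewrite !ffunE.
rewrite -(card_in_imset restr_inj) -(cardsC L) addKn.
apply: leq_trans (max_card _) _; rewrite card_ffun card_sig.
by rewrite (eq_card (B := ~: L)) // => b; rewrite inE.
Qed.

Lemma leq_card_bigcup (T I : finType) (P : pred I) (A : I -> {set T}) :
  #|\bigcup_(i | P i) A i| <= \sum_(i | P i) #|A i|.
Proof.
elim/big_rec2: _ => [|i m U _ le_Um]; first by rewrite cards0.
by rewrite (leq_trans (leq_card_setU _ _).1) // leq_add2l.
Qed.

Definition mnm_of_box n (T : 'I_n -> nat) (b : box T) : 'X_{1..n} :=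
  [multinom (b i : nat) | i < n].

Definition box_of_mnm n (T : 'I_n -> nat) (hT : forall i, 0 < T i) (m : 'X_{1..n})
  : box T :=
  @finfun 'I_n (fun i => 'I_(T i)) (fun i => Ordinal (@ltn_pmod (m i) (T i) (hT i))).

Lemma periodic_extE n (F : Type) (T : 'I_n -> nat) (hT : forall i, 0 < T i)
    (p : {ffun box T -> F}) m :
  periodic_ext hT p m = p (box_of_mnm hT m).
Proof. by []. Qed.

Lemma mnm_of_box_inj n (T : 'I_n -> nat) : injective (@mnm_of_box n T).
Proof.
move=> b1 b2 /mnmP eq12; apply/ffunP => i; apply/val_inj.
by have := eq12 i; rewrite !mnmE.
Qed.

Lemma card_box n (T : 'I_n -> nat) : #|box T| = \prod_(i < n) T i.
Proof.
by rewrite card_dep_ffun foldrE big_map big_enum; apply: eq_bigr => i _; rewrite card_ord.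
Qed.

Section Action.

Local Open Scope ring_scope.

Variables (n : nat) (F : nzRingType).

Lemma act_seqE (P : {mpoly F[n]}) (s : nseq_ n F) m (r : seq 'X_{1..n}) :
  uniq r -> {subset msupp P <= r} ->
  act P s m = \sum_(mo <- r) P@_mo * s (m + mo)%MM.
Proof.
move=> r_uniq suppPr; rewrite /act [RHS](bigID (mem (msupp P))) /=.
rewrite [X in _ = _ + X]big1 ?addr0 => [|mo]; last first.
  by rewrite -mcoeff_eq0 => /eqP ->; rewrite mul0r.
rewrite -[in RHS]big_filter; apply/perm_big/uniq_perm; rewrite ?msupp_uniq ?filter_uniq //.
by move=> mo; rewrite mem_filter; case: (boolP (mo \in msupp P)) => // /suppPr ->.
Qed.

Lemma act_sum_monomials k (c : 'I_k -> F) (w : 'I_k -> 'X_{1..n}) (s : nseq_ n F) m :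
  injective w ->
  act (\sum_(i < k) c i *: 'X_[w i]) s m = \sum_(i < k) c i * s (m + w i)%MM.
Proof.
move=> w_inj; rewrite (@act_seqE _ _ _ [seq w i | i <- index_enum 'I_k]).
- rewrite big_map; apply: eq_bigr => j _; congr (_ * _).
  rewrite raddf_sum /= (bigD1 j) //= mcoeffZ mcoeffX eqxx mulr1 big1 ?addr0 // => i ij.
  by rewrite mcoeffZ mcoeffX (inj_eq w_inj) (negbTE ij) mulr0.
- by rewrite map_inj_uniq ?index_enum_uniq.
- move=> mo /msupp_sum_le /flattenP[_ /mapP[i _ ->]] /msuppZ_le.
  by rewrite msuppX inE => /eqP ->; apply: map_f; apply: mem_index_enum.
Qed.

End Action.

(* r ranges over the shifts for which r + a stays in the period box for every
   exponent a in box u, so that no reduction modulo T occurs. *)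
Definition shift_bounds n (T u : 'I_n -> nat) (i : 'I_n) := (T i - u i).+1.

Section ShiftedSystem.

Variables (F : finFieldType) (n : nat) (T u : 'I_n -> nat).
Hypotheses (hT : forall i, 0 < T i) (hu : forall i, u i <= T i).

Lemma box_of_mnm_addE (r : box (shift_bounds T u)) (a : box u) i :
  box_of_mnm hT (mnm_of_box r + mnm_of_box a) i = r i + a i :> nat.
Proof.
rewrite ffunE /= mnmDE !mnmE modn_small //.
by have := ltn_ord (r i); have := ltn_ord (a i); have := hu i; rewrite /shift_bounds; lia.
Qed.

Lemma box_of_mnm_add_inj (r r' : box (shift_bounds T u)) (a a' : box u) :
  box_of_mnm hT (mnm_of_box r + mnm_of_box a) =
    box_of_mnm hT (mnm_of_box r' + mnm_of_box a') ->
  (mnm_of_box r + mnm_of_box a = mnm_of_box r' + mnm_of_box a')%MM.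
Proof.
move=> /ffunP eq_pos; apply/mnmP => i; rewrite !mnmDE !mnmE.
by have := congr1 val (eq_pos i); rewrite -!box_of_mnm_addE.
Qed.

Variables (k : nat) (a : 'I_k -> box u).
Hypothesis a_inj : injective a.

Local Open Scope ring_scope.

Let pos (r : box (shift_bounds T u)) i := box_of_mnm hT (mnm_of_box r + mnm_of_box (a i)).

Definition shift_solutions (c : 'I_k -> F) : {set {ffun box T -> F}} :=
  [set p : {ffun box T -> F} | [forall r, \sum_(i < k) c i * p (pos r i) == 0]].

Lemma shift_solutionsB c p1 p2 :
  p1 \in shift_solutions c -> p2 \in shift_solutions c -> p1 - p2 \in shift_solutions c.
Proof.
rewrite !inE => /forallP sol1 /forallP sol2; apply/forallP => r.
under eq_bigr do rewrite !ffunE mulrBr.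
by rewrite sumrB (eqP (sol1 r)) (eqP (sol2 r)) subrr.
Qed.

Lemma shift_inj i : injective (pos^~ i).
Proof.
move=> r r' /box_of_mnm_add_inj eq_mnm.
by apply/mnm_of_box_inj/(@addmI _ (mnm_of_box (a i))); rewrite addmC eq_mnm addmC.
Qed.

Section LeadingTerm.

Variables (c : 'I_k -> F) (ist : 'I_k).
Hypotheses (c_ist : c ist != 0)
  (ist_max : forall i, c i != 0 -> (mnm_of_box (a i) <= mnm_of_box (a ist))%O).

Let lead r := pos r ist.

Lemma shift_solution_eq0 p :
  p \in shift_solutions c -> {in ~: [set lead r | r in setT], forall b, p b = 0} -> p = 0.
Proof.
rewrite inE => /forallP sol p_off.
(* At a least shift r0 with p (lead r0) <> 0, every other term of the equation
   at r0 sits off the leading positions or at the leading position of a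
   smaller shift, so it vanishes. *)
have p_lead r : p (lead r) = 0.
  apply/eqP/negPn/negP => nz.
  case: (@arg_minP _ _ _ _ (fun r => p (lead r) != 0) (@mnm_of_box n _) nz)
    => r0 nz0 r0_min.
  have rest0 : \sum_(i < k | i != ist) c i * p (pos r0 i) = 0.
    apply: big1 => i i_ne; have [->|c_i] := eqVneq (c i) 0; first by rewrite mul0r.
    suff -> : p (pos r0 i) = 0 by rewrite mulr0.
    have [/imsetP[r' _ pos_eq]|nL] := boolP (pos r0 i \in [set lead r | r in setT]).
      2: by apply: p_off; rewrite inE.
    apply/eqP/negPn/negP => nz'; rewrite pos_eq in nz'.
    have lt_ai : (mnm_of_box (a i) < mnm_of_box (a ist))%O.
      by rewrite lt_neqAle ist_max // andbT (inj_eq (@mnm_of_box_inj n u)) (inj_eq a_inj).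
    have := r0_min r' nz'; rewrite leNgt => /negP; apply.
    rewrite -(ltmc_add2l _ _ (mnm_of_box (a ist))) -(box_of_mnm_add_inj pos_eq).
    by rewrite ltmc_add2r.
  move/eqP: (sol r0); rewrite (bigD1 ist) //= rest0 addr0 => /eqP.
  by rewrite mulf_eq0 (negPf c_ist) (negPf nz0).
apply/ffunP => b; rewrite ffunE.
have [/imsetP[r _ ->]|] := boolP (b \in [set lead r | r in setT]); first exact: p_lead.
by move=> nL; apply: p_off; rewrite inE.
Qed.

End LeadingTerm.

Lemma card_shift_solutions (c : {ffun 'I_k -> F}) : c != 0 ->
  (#|shift_solutions c| <= #|F| ^ (#|box T| - #|box (shift_bounds T u)|))%N.
Proof.
move=> c_nz; have [i0 c_i0] : exists i, c i != 0.
  apply/existsP; apply: contraNT c_nz => /existsPn c0.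
  by apply/eqP/ffunP => i; rewrite ffunE; apply/eqP/negPn/c0.
have [ist c_ist ist_max] :=
  @arg_maxP _ _ _ _ (fun i => c i != 0) (fun i => mnm_of_box (a i)) c_i0.
apply: leq_trans (card_ffun_determined_off (L := [set pos r ist | r in setT]) _) _.
  move=> p1 p2 sol1 sol2 agree; apply/eqP; rewrite -subr_eq0; apply/eqP.
  apply: (shift_solution_eq0 c_ist ist_max (shift_solutionsB sol1 sol2)) => b bL.
  by rewrite !ffunE agree // subrr.
by rewrite card_imset ?cardsT //; apply: shift_inj.
Qed.

Definition degenerate_periods : {set {ffun box T -> F}} :=
  \bigcup_(c : {ffun 'I_k -> F} | c != 0) shift_solutions c.

Lemma card_degenerate_periods :
  (#|degenerate_periods| <= #|F| ^ k * #|F| ^ (#|box T| - #|box (shift_bounds T u)|))%N.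
Proof.
set e := (#|box T| - _)%N; apply: leq_trans (leq_card_bigcup _ _) _.
apply: (@leq_trans (\sum_(c : {ffun 'I_k -> F}) #|F| ^ e)).
  rewrite [X in (_ <= X)%N](bigID (fun c => c != 0)) /=; apply: leq_trans (leq_addr _ _).
  by apply: leq_sum => c; apply: card_shift_solutions.
by rewrite sum_nat_const card_ffun card_ord.
Qed.

Lemma quot_dim_ge_periodic_ext p :
  p \notin degenerate_periods -> quot_dim_ge (periodic_ext hT p) k.
Proof.
move=> p_good; exists (fun i => 'X_[mnm_of_box (a i)]) => c sol i.
apply/eqP; apply: contraR p_good => c_i; apply/bigcupP; exists (finfun c).
  by apply: contra c_i => /eqP/ffunP/(_ i); rewrite !ffunE => ->.
rewrite inE; apply/forallP => r; apply/eqP.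
have := sol (mnm_of_box r); rewrite act_sum_monomials => [sum0|]; last first.
  by move=> i1 i2 /mnm_of_box_inj /a_inj.
by apply: etrans sum0; apply: eq_bigr => j _; rewrite ffunE periodic_extE.
Qed.

End ShiftedSystem.

Lemma quot_dim_ge_outside_small_set (F : finFieldType) n (T u : 'I_n -> nat)
    (hT : forall i, 0 < T i) k K :
  (forall i, 0 < u i <= T i) -> k <= \prod_(i < n) u i ->
  k + K <= \prod_(i < n) (T i - u i).+1 ->
  exists2 B : {set {ffun box T -> F}}, #|B| * #|F| ^ K <= #|F| ^ (\prod_(i < n) T i) &
    forall p, p \notin B -> quot_dim_ge (periodic_ext hT p) k.
Proof.
move=> u_bnd ku kKR; have hu i : u i <= T i by case/andP: (u_bnd i).
have k_box : k <= #|box u| by rewrite card_box.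
pose a (i : 'I_k) : box u := enum_val (widen_ord k_box i).
have a_inj : injective a by move=> i j /enum_val_inj /(congr1 val) ij; apply: val_inj.
exists (degenerate_periods F hT a); last exact: quot_dim_ge_periodic_ext.
apply: leq_trans (leq_mul (card_degenerate_periods F hT hu a_inj) (leqnn _)) _.
rewrite -!expnD leq_exp2l ?card_finNzRing_gt1 // !card_box.
have : \prod_(i < n) (T i - u i).+1 <= \prod_(i < n) T i.
  by apply: leq_prod => i _; have := u_bnd i; lia.
by rewrite /shift_bounds; lia.
Qed.

Section RealBounds.

Local Open Scope R_scope.

Lemma exists_nat_mul_gt1 eps : 0 < eps ->
  exists m, forall m', (m <= m')%N -> 1 < INR m' * eps.
Proof.
move=> eps_gt0; have [m m_gt] := INR_unbounded (/ eps); exists m => m' /ssrnat.leP le_mm'.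
have := le_INR _ _ le_mm'; have := Rinv_r eps (Rgt_not_eq _ _ eps_gt0); nra.
Qed.

Lemma sqrt_lt_of_sq_gt (M D N k : nat) eps : (0 < M)%N -> (0 < D)%N ->
  1 < INR M * eps -> ((M - 1) * N < M * D * k ^ 2)%N ->
  sqrt ((1 - eps) * INR N / INR D) < INR k.
Proof.
move=> /ssrnat.ltP M0 /ssrnat.ltP D0 M_eps sq_gt.
have /ssrnat.ltP/lt_0_INR k_gt0 : (0 < k)%N by case: k sq_gt => //; rewrite exp0n // muln0.
move/ssrnat.ltP/lt_INR: sq_gt.
rewrite !mult_INR minus_INR ?pow_INR /=; last by apply/ssrnat.leP; apply/ssrnat.ltP.
have := lt_0_INR _ M0; have := lt_0_INR _ D0; have := pos_INR N.
move=> N_ge0 D_gt0 M_gt0 sq_gt.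
have y_lt : (1 - eps) * INR N / INR D < INR k * INR k.
  apply: (Rmult_lt_reg_r (INR D)) => //; rewrite /Rdiv Rmult_assoc Rinv_l; last lra.
  apply: (Rmult_lt_reg_l (INR M)) => //; nra.
case: (Rle_lt_dec ((1 - eps) * INR N / INR D) 0) => [y_le0|y_gt0].
  by rewrite sqrt_neg_0.
rewrite -(sqrt_square (INR k)); last lra.
by apply: sqrt_lt_1_alt; lra.
Qed.

Lemma ratio_gt_one_sub (G B Q m : nat) eps : (0 < Q)%N -> (Q <= G + B)%N ->
  (B * m <= Q)%N -> 1 < INR m * eps -> INR G / INR Q > 1 - eps.
Proof.
move=> /ssrnat.ltP /lt_0_INR Q_gt0 /ssrnat.leP /le_INR QGB /ssrnat.leP /le_INR Bm m_eps.
rewrite plus_INR in QGB; rewrite mult_INR in Bm.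
have B_ge0 := pos_INR B; have eps_gt0 : 0 < eps by move: (pos_INR m); nra.
apply: Rlt_gt; apply: (Rmult_lt_reg_r (INR Q)) => //.
rewrite /Rdiv Rmult_assoc Rinv_l ?Rmult_1_r; last lra.
have : INR B < INR Q * eps.
  have : INR B * INR m * eps <= INR Q * eps by apply: Rmult_le_compat_r; lra.
  by case: (Rle_lt_or_eq_dec 0 (INR B) B_ge0) => [B_gt0|<-]; nra.
lra.
Qed.

End RealBounds.

Lemma pboolP (P : Prop) : reflect P (pbool P).
Proof. by rewrite /pbool; case: excluded_middle_informative => HP; constructor. Qed.

Theorem mainTheorem4 :
  forall (F : finFieldType) (n : nat), (2 <= n)%N ->
  forall eps1 eps2 : R, Rlt 0 eps1 -> Rlt 0 eps2 ->
  exists C : R,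
    forall (T : 'I_n -> nat) (hT : forall i, (0 < T i)%N),
      Rlt C (INR (\prod_(i < n) T i)%N) ->
      Rgt (prob_lc_gt F hT
             (sqrt (Rdiv (Rmult (Rminus 1 eps1) (INR (\prod_(i < n) T i)%N))
                         (INR (n - 1)%N))))
          (Rminus 1 eps2).
Proof.
move=> F n n2 eps1 eps2 eps1_gt0 eps2_gt0.
have [M0 M_eps1] := exists_nat_mul_gt1 eps1_gt0.
have [K K_eps2] := exists_nat_mul_gt1 eps2_gt0.
pose M := (M0 + 2)%N; pose D := (n - 1)%N.
exists (INR (M * D * (2 * M + (M - 1) * (K + 1)) ^ 2)) => T hT /INR_lt /ssrnat.ltP N_big.
have M2 : (2 <= M)%N by rewrite leq_addl.
have D0 : (0 < D)%N by rewrite subn_gt0.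
have [k [k0 k_sq kKN]] := exists_near_sqrt M2 D0 N_big.
have [u [u_bnd [ku kKR]]] := exists_subbox n2 hT k0 kKN.
have [B B_small B_good] := quot_dim_ge_outside_small_set F hT u_bnd ku kKR.
apply: (ratio_gt_one_sub (B := #|B|) (m := (#|F| ^ K)%N)) => //.
- by rewrite expn_gt0 ltnW // card_finNzRing_gt1.
- rewrite -card_box -card_ffun -(cardsC B) addnC leq_add2r; apply/subset_leq_card/subsetP.
  move=> p; rewrite !inE => pB; apply/pboolP; exists k; split; last exact: B_good.
  rewrite card_box; apply: sqrt_lt_of_sq_gt k_sq => //; first exact: ltnW.
  by apply: M_eps1; rewrite leq_addr.
- exact: K_eps2 (ltnW (ltn_expl _ (card_finNzRing_gt1 F))).
Qed.
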